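(* Let $P$ be a finite lattice and let $r:\mathcal{L}_P\to\mathbb{R}_{\ge0}$ satisfy (R.1) $r(f)\le r(g)$ whenever $f\le g$, and (R.2) $r(f+g)=r(f)+r(g)-r(f\cdot g)$ whenever $(f,g)$ is a modular pair in $\mathcal{L}_P$. Then there exists an additive map $\mu:2^P\to\mathbb{R}_{\ge0}$ (i.e. $\mu(S\cup T)=\mu(S)+\mu(T)$ for disjoint $S,T$) such that $r(f)=\mu(P\setminus\Phi f)+r(0)$ for every $f\in\mathcal{L}_P$.
   Context: $P$ is a finite lattice with greatest element $\hat p$. $\mathcal{L}_P$ is the set of maps $f:P\to P$ satisfying (A.1) $a\le f(a)$; (A.2) $a\le b\Rightarrow f(a)\le f(b)$; (A.3) $f(f(a))=f(a)$, ordered pointwise; it is a lattice with join $+$, meet $\cdot$, least element $0$ (identity map). $\Phi f=\{a:f(a)=a\}$. A pair $(f,g)$ in a lattice is a modular pair if $h+(f\cdot g)=(h+f)\cdot g$ for every $h\le g$. *)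

From HB Require Import structures.
From mathcomp Require Import all_boot all_order all_algebra.
Set Implicit Arguments. Unset Strict Implicit. Unset Printing Implicit Defensive.
Import Order.TTheory GRing.Theory Num.Theory.

Local Open Scope order_scope.

Section ClosureOps.
Variables (d : Order.disp_t) (P : finTBLatticeType d).

Definition closure_op (f : {ffun P -> P}) : bool :=
  [&& [forall a, a <= f a],
      [forall a, forall b, (a <= b) ==> (f a <= f b)] &
      [forall a, f (f a) == f a]].

Definition LP := {f : {ffun P -> P} | closure_op f}.

Definition lep (f g : LP) : bool := [forall a, sval f a <= sval g a].

Definition is_join (j f g : LP) : Prop :=
  [/\ lep f j, lep g j & forall h : LP, lep f h -> lep g h -> lep j h].

Definition is_meet (m f g : LP) : Prop :=
  [/\ lep m f, lep m g & forall h : LP, lep h f -> lep h g -> lep h m].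

(* (f,g) is a modular pair in L_P: h + (f . g) = (h + f) . g for all h <= g *)
Definition modular_pair (f g : LP) : Prop :=
  forall m, is_meet m f g ->
  forall h, lep h g ->
  forall j1, is_join j1 h m ->
  forall j2, is_join j2 h f ->
  forall m2, is_meet m2 j2 g -> j1 = m2.

Lemma closure_op_id : closure_op [ffun a : P => a].
Proof.
apply/and3P; split.
- by apply/forallP => a; rewrite ffunE.
- by apply/forallP => a; apply/forallP => b; rewrite !ffunE; apply/implyP.
- by apply/forallP => a; rewrite !ffunE.
Qed.

Definition LP0 : LP := exist _ [ffun a : P => a] closure_op_id.

Definition Phi (f : LP) : {set P} := [set a | sval f a == a].

End ClosureOps.

From HB Require Import structures.
From mathcomp Require Import all_boot all_order all_algebra.
From mathcomp Require Import lra.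
Import Order.TTheory GRing.Theory Num.Theory.
Set Implicit Arguments. Unset Strict Implicit. Unset Printing Implicit Defensive.

(* A closure operator f is determined by its set of fixed points Phi f, and the
   sets arising this way are exactly the Moore families of P (containing the
   top and closed under meets).  Under f |-> Phi f, the join in L_P becomes
   intersection, and the meet becomes union whenever the union is again a
   Moore family.  Let 1 be the closure with Phi 1 = {top} and B_x the one with
   Phi B_x = {x, top}, and put mu {x} := r 1 - r B_x.  If x is a minimal point
   outside Phi f, then x |: Phi f is a Moore family M, f + B_x = 1,
   f . B_x = M, and (f, B_x) is modular, so (R.2) gives r f = r M + mu {x}.
   Induction on the number of non-fixed points concludes. *)

Section MooreFamilies.
Local Open Scope order_scope.
Variables (d : Order.disp_t) (P : finTBLatticeType d).
Implicit Types (f g h j m : LP P) (S T : {set P}) (a b x : P).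

Lemma closure_ext f a : a <= sval f a.
Proof. by case/and3P: (svalP f) => /forallP. Qed.

Lemma closure_mono f a b : a <= b -> sval f a <= sval f b.
Proof. by case/and3P: (svalP f) => _ /forallP/(_ a)/forallP/(_ b)/implyP. Qed.

Lemma closure_idem f a : sval f (sval f a) = sval f a.
Proof. by case/and3P: (svalP f) => _ _ /forallP/(_ a)/eqP. Qed.

Lemma lep_Phi f g : lep f g = (Phi g \subset Phi f).
Proof.
apply/forallP/subsetP => [le_fg a | sub_gf a].
- rewrite !inE => /eqP ga; apply/eqP/le_anti.
  by rewrite closure_ext andbT -{2}ga le_fg.
- have : sval g a \in Phi f by apply: sub_gf; rewrite inE closure_idem.
  by rewrite inE => /eqP <-; apply/closure_mono/closure_ext.
Qed.

Lemma Phi_inj : injective (@Phi d P).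
Proof.
move=> f g eq_fg; have /forallP le_fg : lep f g by rewrite lep_Phi eq_fg.
have /forallP le_gf : lep g f by rewrite lep_Phi eq_fg.
by apply/val_inj/ffunP => a; apply/le_anti; rewrite le_fg le_gf.
Qed.

Lemma Phi_LP0 : Phi (LP0 P) = setT.
Proof. by apply/setP => a; rewrite !inE /= ffunE eqxx. Qed.

Definition moore S : Prop := \top \in S /\ {in S &, forall a b, a `&` b \in S}.

Definition closure_of S : {ffun P -> P} := [ffun a => \meet_(y in S | a <= y) y].

Lemma closure_of_ge S a : a <= closure_of S a.
Proof. by rewrite ffunE; apply/meetsP => y /andP[]. Qed.

Lemma closure_of_le S a b : b \in S -> a <= b -> closure_of S a <= b.
Proof. by move=> bS ab; rewrite ffunE; apply: meets_inf; rewrite bS. Qed.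

Lemma closure_of_in S a : moore S -> closure_of S a \in S.
Proof.
case=> topS meetS; rewrite ffunE.
by apply: (big_ind (fun y => y \in S)) => // y /andP[].
Qed.

Lemma closure_of_id S a : a \in S -> closure_of S a = a.
Proof. by move=> aS; apply/le_anti; rewrite closure_of_le // closure_of_ge. Qed.

Lemma closure_op_closure_of S : moore S -> closure_op (closure_of S).
Proof.
move=> HS; apply/and3P; split; apply/forallP => a.
- exact: closure_of_ge.
- apply/forallP => b; apply/implyP => ab; apply: closure_of_le.
    exact: closure_of_in.
  exact: le_trans ab (closure_of_ge _ _).
- by rewrite closure_of_id // closure_of_in.
Qed.

Definition LP_of_moore S (HS : moore S) : LP P :=
  exist _ (closure_of S) (closure_op_closure_of HS).

Lemma Phi_LP_of_moore S (HS : moore S) : Phi (LP_of_moore HS) = S.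
Proof.
apply/setP => a; rewrite inE /=; apply/eqP/idP => [<-|]; last exact: closure_of_id.
exact: closure_of_in.
Qed.

Lemma moore_Phi f : moore (Phi f).
Proof.
split=> [|a b]; first by rewrite inE; apply/eqP/le_anti; rewrite closure_ext lex1.
rewrite !inE => /eqP fa /eqP fb; apply/eqP/le_anti; rewrite closure_ext andbT lexI.
by rewrite -{2}fa -{3}fb !closure_mono ?leIl ?leIr.
Qed.

Lemma top_Phi f : \top \in Phi f.
Proof. by case: (moore_Phi f). Qed.

Lemma mooreI S T : moore S -> moore T -> moore (S :&: T).
Proof.
case=> topS meetS [topT meetT]; split=> [|a b]; first by rewrite inE topS.
by rewrite !inE => /andP[aS aT] /andP[bS bT]; rewrite meetS ?meetT.
Qed.

Lemma moore_top : moore [set \top].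
Proof. by split=> [|a b]; rewrite ?inE // => /eqP-> /eqP->; rewrite meetxx. Qed.

Lemma moore_top2 x : moore [set x; \top].
Proof.
split=> [|a b]; first by rewrite !inE eqxx orbT.
by rewrite !inE => /orP[]/eqP-> /orP[]/eqP->; rewrite ?meetxx ?meetx1 ?meet1x ?eqxx ?orbT.
Qed.

(* Adding a minimal non-member keeps a Moore family Moore: x `&` b is either
   x itself or lies strictly below x. *)
Lemma moore_setU1 S x : moore S -> (forall z, z < x -> z \in S) -> moore (x |: S).
Proof.
case=> topS meetS below_x.
have meet_x b : b \in x |: S -> x `&` b \in x |: S.
  rewrite !in_setU1 => /orP[/eqP->|bS]; first by rewrite meetxx eqxx.
  have [//|ne] := eqVneq (x `&` b) x.
  by rewrite below_x ?orbT // lt_neqAle ne leIl.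
split=> [|a b]; first by rewrite in_setU1 topS orbT.
rewrite {1}in_setU1 => /orP[/eqP->|aS]; first exact: meet_x.
rewrite in_setU1 => /orP[/eqP->|bS]; first by rewrite meetC meet_x // in_setU1 aS orbT.
by rewrite in_setU1 meetS ?orbT.
Qed.

Lemma exists_minimal_notin S : S != setT ->
  exists2 x, x \notin S & forall z, z < x -> z \in S.
Proof.
move=> S_neqT; have /set0Pn[x0 x0S] : ~: S != set0 by rewrite -setCT (inj_eq (@setC_inj _)).
have [x xS minx] := arg_minnP (fun x => #|[set z | z <= x]|) x0S.
exists x; first by rewrite -in_setC.
move=> z zx; apply/negPn/negP; rewrite -in_setC => /minx; apply/negP; rewrite -ltnNge.
apply/proper_card/properP; split.
  by apply/subsetP => y; rewrite !inE => /le_trans; apply; apply: ltW.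
by exists x; rewrite !inE ?lexx // lt_geF.
Qed.

Lemma is_join_Phi j f g : Phi j = Phi f :&: Phi g -> is_join j f g.
Proof.
move=> PHj; split=> [||h]; rewrite !lep_Phi PHj ?subsetIl ?subsetIr //.
by move=> hf hg; rewrite subsetI hf.
Qed.

Lemma is_meet_Phi m f g : Phi m = Phi f :|: Phi g -> is_meet m f g.
Proof.
move=> PHm; split=> [||h]; rewrite !lep_Phi PHm ?subsetUl ?subsetUr //.
by move=> fh gh; rewrite subUset fh.
Qed.

Lemma Phi_is_join j f g : is_join j f g -> Phi j = Phi f :&: Phi g.
Proof.
case=> fj gj least_j; apply/eqP; rewrite eqEsubset subsetI -!lep_Phi fj gj /=.
have HI := mooreI (moore_Phi f) (moore_Phi g).
by rewrite -(Phi_LP_of_moore HI) -lep_Phi least_j // lep_Phi Phi_LP_of_moore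
  ?subsetIl ?subsetIr.
Qed.

Lemma Phi_is_meet m f g : moore (Phi f :|: Phi g) -> is_meet m f g ->
  Phi m = Phi f :|: Phi g.
Proof.
move=> HU [mf mg greatest_m]; apply/eqP.
rewrite eqEsubset subUset -!lep_Phi mf mg andbT.
by rewrite -(Phi_LP_of_moore HU) -lep_Phi greatest_m // lep_Phi Phi_LP_of_moore
  ?subsetUl ?subsetUr.
Qed.

Definition LPtop : LP P := LP_of_moore moore_top.
Definition LPcoatom x : LP P := LP_of_moore (moore_top2 x).

Section ElementaryStep.
Variables (f : LP P) (x : P).
Hypothesis HM : moore (x |: Phi f).

Lemma Phi_LPcoatom_setU : Phi f :|: Phi (LPcoatom x) = x |: Phi f.
Proof.
rewrite Phi_LP_of_moore setUC -setUA; congr (_ :|: _).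
by apply/setUidPr; rewrite sub1set top_Phi.
Qed.

Lemma is_join_LPcoatom : x \notin Phi f -> is_join LPtop f (LPcoatom x).
Proof.
move=> xNf; apply: is_join_Phi; rewrite !Phi_LP_of_moore.
apply/setP => y; rewrite in_setI in_set1 in_set2.
have [->|_] := eqVneq y \top; first by rewrite top_Phi orbT.
by rewrite orbF; have [->|] := eqVneq y x; rewrite ?(negbTE xNf) ?andbF.
Qed.

Lemma is_meet_LPcoatom : is_meet (LP_of_moore HM) f (LPcoatom x).
Proof. by apply: is_meet_Phi; rewrite Phi_LPcoatom_setU Phi_LP_of_moore. Qed.

Lemma modular_pair_LPcoatom : modular_pair f (LPcoatom x).
Proof.
move=> m Hm h hB j1 Hj1 j2 Hj2 m2 Hm2; apply: Phi_inj.
have Pm : Phi m = x |: Phi f by rewrite (Phi_is_meet _ Hm) Phi_LPcoatom_setU.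
have xh : x \in Phi h.
  by move: hB; rewrite lep_Phi Phi_LP_of_moore => /subsetP; apply; rewrite !inE eqxx.
have Pm2 : Phi j2 :|: Phi (LPcoatom x) = Phi h :&: (x |: Phi f).
  rewrite (Phi_is_join Hj2) Phi_LP_of_moore; apply/setP => y.
  rewrite in_setU !in_setI in_set2 in_setU1.
  have [->|_] := eqVneq y x; first by rewrite xh orbT.
  by have [->|_] := eqVneq y \top; rewrite ?top_Phi ?orbT ?orbF.
rewrite (Phi_is_join Hj1) Pm (Phi_is_meet _ Hm2) Pm2 //.
exact: mooreI (moore_Phi h) HM.
Qed.

Lemma setC_Phi_moore_setU1 : ~: Phi (LP_of_moore HM) = ~: Phi f :\ x.
Proof. by apply/setP => y; rewrite Phi_LP_of_moore !inE negb_or andbC. Qed.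

End ElementaryStep.
End MooreFamilies.

Local Open Scope ring_scope.

Section Rank.
Variables (d : Order.disp_t) (P : finTBLatticeType d) (R : realFieldType).
Variable r : LP P -> R.
Hypothesis r_mono : forall f g, lep f g -> r f <= r g.
Hypothesis r_modular : forall f g j m, is_join j f g -> is_meet m f g ->
  modular_pair f g -> r j = r f + r g - r m.

Definition point_weight (x : P) : R := r (LPtop P) - r (LPcoatom x).

Lemma point_weight_ge0 x : 0 <= point_weight x.
Proof. by rewrite subr_ge0 r_mono // lep_Phi !Phi_LP_of_moore sub1set !inE eqxx orbT. Qed.

Lemma r_step f x (HM : moore (x |: Phi f)) : x \notin Phi f ->
  r f = r (LP_of_moore HM) + point_weight x.
Proof.
move=> xNf.
have := r_modular (is_join_LPcoatom xNf) (is_meet_LPcoatom HM) (modular_pair_LPcoatom HM).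
by rewrite /point_weight => ->; lra.
Qed.

Lemma r_sum_point_weight f : r f = \sum_(x in ~: Phi f) point_weight x + r (LP0 P).
Proof.
move: (ltnSn #|~: Phi f|); move: {2}_.+1 => n; elim: n f => // n IH f card_f.
have [PHfT|/exists_minimal_notin[x xNf minx]] := eqVneq (Phi f) setT.
  have -> : f = LP0 P by apply: Phi_inj; rewrite PHfT Phi_LP0.
  by rewrite Phi_LP0 setCT big_set0 add0r.
have HM := moore_setU1 (moore_Phi f) minx.
have xCf : x \in ~: Phi f by rewrite inE.
rewrite (r_step HM xNf) IH; last by rewrite (cardsD1 x) xCf -setC_Phi_moore_setU1 in card_f.
by rewrite setC_Phi_moore_setU1 (big_setD1 x xCf) /=; lra.
Qed.

End Rank.

Theorem mainTheorem16 (d : Order.disp_t) (P : finTBLatticeType d)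
    (R : realFieldType) (r : LP P -> R)
    (r_nonneg : forall f, 0 <= r f)
    (R1 : forall f g, lep f g -> r f <= r g)
    (R2 : forall f g j m, is_join j f g -> is_meet m f g -> modular_pair f g ->
            r j = r f + r g - r m) :
  exists mu : {set P} -> R,
    [/\ forall S : {set P}, 0 <= mu S,
        forall S T : {set P}, [disjoint S & T] -> mu (S :|: T) = mu S + mu T &
        forall f : LP P, r f = mu (~: Phi f) + r (LP0 P)].
Proof.
exists (fun S : {set P} => \sum_(x in S) point_weight r x); split.
- by move=> S; apply/sumr_ge0 => x _; exact: (point_weight_ge0 R1).
- by move=> S T dST; rewrite -bigU //; apply: eq_bigl => x; rewrite inE.
- exact: r_sum_point_weight R2.
Qed.
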